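(* Let $d,m,n\ge1$, $\alpha=\omega^d\cdot m$, $k\ge1$, $i\ge0$. Suppose that $(X_\ell:\ell<2^in-2^i+1)$ is a stack of $(\alpha,k,i)$-persistent sets. Then $\bigcup_\ell X_\ell$ is $(\alpha\cdot n,k,i)$-persistent, where $\alpha\cdot n$ denotes $\omega^d\cdot(mn)$.
   Context: Strings are finite binary strings with $\preceq$ the initial-segment order; $2^i$ also denotes the set of strings of length $i$; a tree is a set of strings closed under initial segments; a leaf of a finite tree is a $\preceq$-maximal element. For finite $X=\{x_0<\dots<x_n\}$, a finite tree $T$ is $X$-quasistrong if $T\cap 2^{x_i}\ne\emptyset$ for all $i\le n$ and for each $i<n$ every $\sigma\in T\cap2^{x_i}$ has exactly two incompatible extensions in $T\cap 2^{x_{i+1}}$. A stack is a sequence $(X_\ell:\ell<N)$ of nonempty finite sets with $\max X_\ell<\min X_{\ell+1}$. Largeness: $X$ is $\omega$-large if $|X|>\min X$; $X$ is $\omega^d\cdot n$-large if it is the union of a stack of $n$ many $\omega^d$-large sets; $X$ is $\omega^{d+1}$-large if $X=\{\min X\}\cup X_1$ with $\min X_1>\min X$ and $X_1$ $\omega^d\cdot\min X$-large. Persistence ($d,m,k\ge1$, $\alpha=\omega^d\cdot m$, $X$ nonempty finite): $X$ is $(\alpha,k,0)$-persistent iff $\alpha$-large; for $i\ge1$, $X$ is $(\alpha,k,i)$-persistent iff $X$ contains an $(\alpha,k,i-1)$-persistent subset $Y$ such that for every $X$-quasistrong tree $T$ and every $C:T\cap 2^{\max X}\to k$ there exist $c<k$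 and a $Y$-quasistrong finite tree $S\subseteq T$ all of whose leaves have extensions in $C^{-1}(c)$. *)

From mathcomp Require Import all_boot.
Set Implicit Arguments. Unset Strict Implicit. Unset Printing Implicit Defensive.

(* Conventions:
   - binary strings are [seq bool]; [prefix s t] is the initial-segment order s ⪯ t;
   - a nonempty finite set of naturals X = {x_0 < ... < x_n} is represented by the
     strictly increasing sequence [:: x_0; ...; x_n] (so min X = head, max X = last);
   - a finite set of strings (e.g. a finite tree) is a [seq (seq bool)] (membership \in). *)

Definition string := seq bool.

Definition nat_set (X : seq nat) : Prop := sorted ltn X.

Definition set_min (X : seq nat) : nat := head 0 X.
Definition set_max (X : seq nat) : nat := last 0 X.

Definition is_stack (Xs : seq (seq nat)) : Prop :=
  (forall X, X \in Xs -> X != [::] /\ nat_set X) /\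
  (forall l, l.+1 < size Xs ->
     set_max (nth [::] Xs l) < set_min (nth [::] Xs l.+1)).

(* wl d X  <->  X is omega^(d+1)-large.
   omega-large: |X| > min X.
   omega^(d+2)-large: X = {min X} ∪ X1, X1 nonempty with min X1 > min X, and X1 is
   omega^(d+1)·(min X)-large, i.e. the union of a stack of (min X) many
   omega^(d+1)-large sets. *)
Fixpoint wl (d : nat) (X : seq nat) {struct d} : Prop :=
  match d with
  | 0 => set_min X < size X
  | d'.+1 =>
      match X with
      | [::] => False
      | x :: X1 =>
          X1 != [::] /\ x < head 0 X1 /\
          exists Ys : seq (seq nat),
            [/\ size Ys = x, is_stack Ys,
                (forall Y, Y \in Ys -> wl d' Y) & flatten Ys = X1]
      end
  end.

(* omega^d-large, for d >= 1 *)
Definition omega_large (d : nat) (X : seq nat) : Prop := wl d.-1 X.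

Definition large (d m : nat) (X : seq nat) : Prop :=
  exists Ys : seq (seq nat),
    [/\ size Ys = m, is_stack Ys,
        (forall Y, Y \in Ys -> omega_large d Y) & flatten Ys = X].

Definition is_tree (T : seq string) : Prop :=
  forall t, t \in T -> forall s, prefix s t -> s \in T.

Definition incompatible (s t : string) : bool := ~~ prefix s t && ~~ prefix t s.

Definition leaf (T : seq string) (s : string) : Prop :=
  s \in T /\ forall t, t \in T -> prefix s t -> t = s.

Definition quasistrong (X : seq nat) (T : seq string) : Prop :=
  is_tree T /\
  (forall x, x \in X -> exists s, s \in T /\ size s = x) /\
  (forall j, j.+1 < size X ->
     forall s, s \in T -> size s = nth 0 X j ->
       exists t1 t2,
         [/\ t1 \in T, t2 \in T, size t1 = nth 0 X j.+1, size t2 = nth 0 X j.+1 &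
         [/\ prefix s t1, prefix s t2, t1 != t2, incompatible t1 t2 &
             forall t, t \in T -> size t = nth 0 X j.+1 -> prefix s t ->
               t = t1 \/ t = t2]]).

Fixpoint persistent (d m k i : nat) (X : seq nat) {struct i} : Prop :=
  match i with
  | 0 => large d m X
  | i'.+1 =>
      exists Y : seq nat,
        [/\ nat_set Y, Y != [::], {subset Y <= X}, persistent d m k i' Y &
        forall T : seq string, quasistrong X T ->
          forall C : string -> 'I_k,
            exists (c : 'I_k) (S : seq string),
              [/\ {subset S <= T}, quasistrong Y S &
                  forall s, leaf S s ->
                    exists t, [/\ t \in T, size t = set_max X, prefix s t & C t = c]]]
  end.

(* Say that X reduces to Y when every X-quasistrong tree T, coloured with k colours,
   contains a Y-quasistrong subtree whose leaves all extend to nodes of T at height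
   max X of a single colour; (i+1)-persistence of X asks for an i-persistent Y ⊆ X to
   which X reduces.

   Glueing: if X0, X1, R reduce to Y0, Y1, YR (consecutive blocks, |Y1| >= 2), then
   X0 ∪ X1 ∪ R reduces to Y0 ∪ YR.  Colour every node τ of T at height max X1 by the
   colour of a rooted YR-subtree above τ with monochromatic leaves; colour every node σ
   at height max X0 by a colour shared by two distinct such τ above σ, which exist
   because the Y1-reduct of the cone above σ splits between its first two levels.  A Y0-subtree
   monochromatic for this second colouring, cut at its top level and with the two
   YR-subtrees grafted above each top node, is the required (Y0 ∪ YR)-subtree.

   For i = 0 the union of n consecutive ω^d·m-large sets is
   ω^d·(mn)-large.  For i+1 there are 2M+1 blocks X_0, X_1, ..., with M = 2^i n - 2^i;
   glueing X_0, X_1 and the rest repeatedly, the union reduces to the union of the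
   witnesses of X_0, X_2, X_4, ..., a stack of M+1 i-persistent sets, whose union is
   (ω^d·mn, k, i)-persistent by induction. *)

From mathcomp Require Import all_boot zify.
From Stdlib Require Import IndefiniteDescription.
Set Implicit Arguments. Unset Strict Implicit. Unset Printing Implicit Defensive.

Lemma guarded_choice (A B : Type) (b0 : B) (G : pred A) (P : A -> B -> Prop) :
  (forall a, G a -> exists b, P a b) -> exists f : A -> B, forall a, G a -> P a (f a).
Proof.
move=> HP; apply: (functional_choice (fun a b => G a -> P a b)) => a.
by case: (boolP (G a)) => [/HP [b Pb] | _]; [exists b | exists b0].
Qed.

Section NonemptySeq.
Variables (T : eqType) (x0 : T).
Implicit Type s : seq T.

Lemma head_in s : s != [::] -> head x0 s \in s.
Proof. by case: s => // x s _; exact: mem_head. Qed.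

Lemma last_in s : s != [::] -> last x0 s \in s.
Proof. by case: s => // x s _ /=; exact: mem_last. Qed.

Lemma last_nonempty y s : s != [::] -> last x0 s = last y s.
Proof. by case: s. Qed.

End NonemptySeq.

Section SortedNat.
Implicit Types A W s : seq nat.

Lemma sorted_ltn_cat A W :
  sorted ltn (A ++ W) = [&& sorted ltn A, sorted ltn W & allrel ltn A W].
Proof. by rewrite !(sorted_pairwise ltn_trans) pairwise_cat andbC andbA. Qed.

Lemma sorted_cat_ltn A W a w : sorted ltn (A ++ W) -> a \in A -> w \in W -> a < w.
Proof. by rewrite sorted_ltn_cat => /and3P[_ _ /allrelP]; apply. Qed.

Lemma sorted_leq_last s x : sorted ltn s -> x \in s -> x <= last 0 s.
Proof.
case/lastP: s => // s y; rewrite -cats1 last_cat mem_cat inE => srt /orP[xs|/eqP->//].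
exact/ltnW/(sorted_cat_ltn srt xs (mem_head _ _)).
Qed.

Lemma sorted_head_leq s x : sorted ltn s -> x \in s -> head 0 s <= x.
Proof.
case: s => // y s; rewrite -cat1s inE => srt /orP[/eqP->//|xs].
exact/ltnW/(sorted_cat_ltn srt (mem_head _ _) xs).
Qed.

End SortedNat.

Lemma is_stackE Xs :
  is_stack Xs <-> (forall X, X \in Xs -> X != [::]) /\ sorted ltn (flatten Xs).
Proof.
elim: Xs => [|X Xs IH]; first by split=> // _; split.
rewrite /= sorted_ltn_cat; split.
- case=> HXs Hcons; have [neX sX] := HXs X (mem_head _ _).
  have [neXs sXs] : (forall Y, Y \in Xs -> Y != [::]) /\ sorted ltn (flatten Xs).
    by apply/IH; split=> [Y HY|l]; [apply: HXs; rewrite inE HY orbT | apply: (Hcons l.+1)].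
  split=> [Y|]; first by rewrite inE => /predU1P[->|/neXs].
  rewrite sX sXs; apply/allrelP => x y xX yXs.
  case: Xs Hcons neXs sXs yXs {IH HXs} => // Y Ys Hcons neXs sXs yXs.
  apply: leq_ltn_trans (sorted_leq_last sX xX) (leq_trans (Hcons 0 isT) _).
  move: (sorted_head_leq sXs yXs) (neXs Y (mem_head _ _)).
  by case: (Y).
- case=> ne /and3P[sX sXs allX]; have neX := ne X (mem_head _ _).
  have [HXs Hcons] : is_stack Xs.
    by apply/IH; split=> // Y HY; apply: ne; rewrite inE HY orbT.
  split=> [Y|[|l] /= Hl]; last exact: Hcons.
    by rewrite inE => /predU1P[->|/HXs //].
  case: Xs Hl HXs allX {IH Hcons ne sXs} => // Y Ys _ HXs /allrelP; apply.
    exact: last_in.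
  by rewrite /= mem_cat head_in //; case: (HXs Y (mem_head _ _)).
Qed.

Lemma is_stack_consE X Xs :
  is_stack (X :: Xs) <-> [/\ X != [::], is_stack Xs & sorted ltn (X ++ flatten Xs)].
Proof.
split=> [/is_stackE[ne srt] | [neX /is_stackE[neXs _] srt]].
  split=> //; first exact: ne X (mem_head _ _).
  apply/is_stackE; split=> [Y HY|]; first by apply: ne; rewrite inE HY orbT.
  by case/cat_sorted2: srt.
by apply/is_stackE; split=> // Y; rewrite inE => /predU1P[->|/neXs].
Qed.

Lemma large_flatten d m Xs : is_stack Xs -> (forall X, X \in Xs -> large d m X) ->
  large d (m * size Xs) (flatten Xs).
Proof.
elim: Xs => [|X Xs IH] stXs largeXs; first by exists [::]; rewrite muln0.
have [_ stXs' srt] := (is_stack_consE X Xs).1 stXs.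
have [Ws [sizeWs stWs largeWs flatWs]] := largeXs X (mem_head _ _).
have largeXs' Y : Y \in Xs -> large d m Y by move=> YXs; apply: largeXs; rewrite inE YXs orbT.
have [Zs [sizeZs stZs largeZs flatZs]] := IH stXs' largeXs'.
have [[neWs _] [neZs _]] := ((is_stackE Ws).1 stWs, (is_stackE Zs).1 stZs).
exists (Ws ++ Zs); split.
- by rewrite size_cat sizeWs sizeZs mulnS.
- apply/is_stackE; split; last by rewrite flatten_cat flatWs flatZs.
  by move=> Y; rewrite mem_cat => /orP[/neWs|/neZs].
- by move=> Y; rewrite mem_cat => /orP[/largeWs|/largeZs].
- by rewrite flatten_cat flatWs flatZs.
Qed.

Lemma flatten_stack_neq0 Xs : is_stack Xs -> Xs != [::] -> flatten Xs != [::].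
Proof. by case: Xs => // X Xs /is_stack_consE[]; case: X. Qed.

Lemma persistent_large d m k i Y : persistent d m k i Y ->
  exists2 L, {subset L <= Y} & large d m L.
Proof.
elim: i Y => [|i IH] Y /=; first by exists Y.
by case=> Y' [_ _ subY' /IH [L subL largeL] _]; exists L => // x /subL /subY'.
Qed.

Lemma wl_size_gt1 d W : wl d W -> W != [::] -> (forall x, x \in W -> 0 < x) -> 1 < size W.
Proof.
case: d => [|d] /=; last by case: W => // x [|y W] // [].
by move=> min_lt neW pos; apply: leq_trans min_lt; exact: pos _ (head_in 0 neW).
Qed.

Lemma large_size_gt1 d m L : 0 < m -> large d m L -> (forall x, x \in L -> 0 < x) ->
  1 < size L.
Proof.
move=> m_gt0 [[|W Ws] [sizeWs stWs largeWs <-]] pos; first by rewrite -sizeWs in m_gt0.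
have [neW _ _] := (is_stack_consE W Ws).1 stWs.
have WL x : x \in W -> x \in flatten (W :: Ws) by rewrite /= mem_cat => ->.
apply: leq_trans (wl_size_gt1 (largeWs W (mem_head _ _)) neW (fun x Wx => pos x (WL x Wx))) _.
by rewrite /= size_cat leq_addr.
Qed.

Lemma persistent_size_gt1 d m k i Y : 0 < m -> persistent d m k i Y ->
  (forall x, x \in Y -> 0 < x) -> 1 < size Y.
Proof.
move=> m_gt0 /persistent_large[L subL largeL] pos.
apply: leq_trans (large_size_gt1 m_gt0 largeL (fun x Lx => pos x (subL x Lx))) _.
apply: uniq_leq_size subL; case: largeL => Ws [_ /is_stackE[_ srt] _ <-].
exact: sorted_uniq ltn_trans ltnn _ srt.
Qed.

Section Strings.
Implicit Types s t u : string.

Definition compatible s t := prefix s t || prefix t s.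

Lemma prefix_size_eq s t : prefix s t -> size s = size t -> s = t.
Proof.
case/prefixP=> w ->; rewrite size_cat -{1}[size s]addn0 => /addnI/esym/size0nil ->.
by rewrite cats0.
Qed.

Lemma prefix_prefix_leq s u t : prefix s t -> prefix u t -> size s <= size u ->
  prefix s u.
Proof.
rewrite !prefixE => /eqP st /eqP ut le_su.
by rewrite -ut take_takel // st.
Qed.

Lemma prefix_prefix_eq s u t : prefix s t -> prefix u t -> size s = size u -> s = u.
Proof.
move=> st ut eq_su; apply: prefix_size_eq (eq_su).
exact: prefix_prefix_leq st ut (eq_leq eq_su).
Qed.

Lemma compatible_prefix s t : compatible s t -> size s <= size t -> prefix s t.
Proof.
case/orP=> // ts le_st; have le_ts := size_prefix ts.
by rewrite (prefix_size_eq ts) ?prefix_refl //; apply/eqP; rewrite eqn_leq le_ts.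
Qed.

Lemma incompatible_neq s t : size s = size t -> s != t -> incompatible s t.
Proof.
move=> eq_st neq_st; apply/andP; split; apply/negP => pre.
  by rewrite (prefix_size_eq pre eq_st) eqxx in neq_st.
by rewrite (prefix_size_eq pre (esym eq_st)) eqxx in neq_st.
Qed.

Lemma compatibleC s t : compatible s t = compatible t s.
Proof. by rewrite /compatible orbC. Qed.

End Strings.

Section QuasistrongTrees.
Implicit Types (X A W : seq nat) (S T P : seq string) (r s t : string).

Definition cone (r : string) (T : seq string) := [seq t <- T | compatible r t].

Definition splits (T : seq string) (x y : nat) :=
  forall s, s \in T -> size s = x ->
    exists t1 t2,
      [/\ t1 \in T, t2 \in T, size t1 = y, size t2 = y &
      [/\ prefix s t1, prefix s t2, t1 != t2, incompatible t1 t2 &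
          forall t, t \in T -> size t = y -> prefix s t -> t = t1 \/ t = t2]].

Definition rooted_quasistrong (W : seq nat) (r : string) (P : seq string) :=
  [/\ quasistrong W P, r \in P, size r = head 0 W & forall t, t \in P -> compatible r t].

Lemma leaf_above S s : s \in S -> exists2 l, leaf S l & prefix s l.
Proof.
have [n] := ubnP (\max_(t <- S) size t - size s); elim: n s => // n IH s bound sS.
case: (boolP (has (fun t => prefix s t && (t != s)) S)) => [|noext].
  case/hasP=> t tS /andP[st neq_ts].
  have lt_st : size s < size t.
    rewrite ltn_neqAle size_prefix // andbT; apply: contra neq_ts => /eqP eq_st.
    by rewrite (prefix_size_eq st eq_st).
  have le_t : size t <= \max_(t <- S) size t := leq_bigmax_seq t tS isT.
  have [l leaf_l tl] := IH t (leq_trans (ltn_sub2l (leq_trans lt_st le_t) lt_st) bound) tS.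
  by exists l => //; exact: prefix_trans st tl.
exists s; last exact: prefix_refl.
split=> // t tS st; apply/eqP; apply: contraNT noext => neq_ts.
by apply/hasP; exists t; rewrite // st neq_ts.
Qed.

Lemma cone_tree r T : is_tree T -> is_tree (cone r T).
Proof.
move=> trT t; rewrite mem_filter => /andP[rt tT] s st.
rewrite mem_filter (trT _ tT _ st) andbT /compatible.
case/orP: rt => [rt | tr]; last by rewrite (prefix_trans st tr) orbT.
case: (leqP (size r) (size s)) => [/(prefix_prefix_leq rt st) -> // | /ltnW].
by move/(prefix_prefix_leq st rt) ->; rewrite orbT.
Qed.

Lemma leaf_cone r S s : r \in S -> leaf (cone r S) s -> leaf S s.
Proof.
move=> rS [sC max_s]; move: (sC); rewrite mem_filter => /andP[rs sS].
have r_s : prefix r s.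
  case/orP: rs => // sr.
  by rewrite (max_s r _ sr) ?prefix_refl // mem_filter /compatible prefix_refl rS.
split=> // t tS st; apply: max_s => //.
by rewrite mem_filter tS /compatible (prefix_trans r_s st).
Qed.

Lemma quasistrong_take n X T : quasistrong X T -> quasistrong (take n X) T.
Proof.
case=> trT [levT splT]; split=> //; split=> [x /mem_take/levT // | j].
rewrite size_take_min leq_min => /andP[lt_jn lt_jX].
by rewrite !nth_take // 1?ltnW //; apply: splT.
Qed.

Lemma quasistrong_drop n X T : quasistrong X T -> quasistrong (drop n X) T.
Proof.
case=> trT [levT splT]; split=> //; split=> [x /mem_drop/levT // | j].
by rewrite size_drop !nth_drop addnS => lt_j; apply: splT; lia.
Qed.

Lemma quasistrong_extend X T s j j' :
  quasistrong X T -> s \in T -> size s = nth 0 X j -> j <= j' -> j' < size X ->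
  exists t, [/\ t \in T, size t = nth 0 X j' & prefix s t].
Proof.
move=> [_ [_ splT]] sT size_s /subnK <-; elim: (j' - j) => [|l IH] lt_l.
  by exists s; split=> //; exact: prefix_refl.
have [t [tT size_t st]] := IH (ltnW lt_l).
have [t1 [t2 [t1T _ size_t1 _ [tt1 _ _ _ _]]]] := splT _ lt_l t tT size_t.
by exists t1; split=> //; exact: prefix_trans st tt1.
Qed.

Lemma quasistrong_cone X T n r :
  sorted ltn X -> quasistrong X T -> n < size X -> r \in T -> size r = nth 0 X n ->
  quasistrong (drop n X) (cone r T).
Proof.
move=> srt qT lt_n rT size_r; have [trT [_ splT]] := qT.
have le_r j : n + j < size X -> size r <= nth 0 X (n + j).
  move=> lt_j; rewrite size_r.
  by apply: (sorted_leq_nth leq_trans leqnn 0 (sub_sorted ltnW srt)); rewrite ?inE ?leq_addr.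
split; first exact: cone_tree.
split=> [x /(nthP 0)[j] | j].
  rewrite size_drop nth_drop => lt_j <-.
  have [|t [tT size_t rt]] := quasistrong_extend qT rT size_r (leq_addr j n).
    by rewrite -ltn_subRL.
  by exists t; rewrite mem_filter /compatible rt.
rewrite size_drop !nth_drop addnS => lt_j s; rewrite mem_filter => /andP[rs sT] size_s.
have r_s : prefix r s by apply: compatible_prefix rs _; rewrite size_s le_r //; lia.
have [|t1 [t2 [t1T t2T size_t1 size_t2 [st1 st2 neq_t inc_t uniq_t]]]] :=
  splT (n + j) _ s sT size_s; first by lia.
exists t1, t2; rewrite !mem_filter /compatible (prefix_trans r_s st1) (prefix_trans r_s st2).
split=> //; split=> // t; rewrite mem_filter => /andP[_]; exact: uniq_t.
Qed.

Lemma quasistrong_cone_cat A W T r :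
  sorted ltn (A ++ W) -> quasistrong (A ++ W) T -> A != [::] -> r \in T ->
  size r = last 0 A -> quasistrong W (cone r T).
Proof.
move=> srt qT neA rT size_r; have A_gt0 : 0 < size A by rewrite lt0n size_eq0.
have lt_A : (size A).-1 < size (A ++ W) by rewrite size_cat; lia.
have size_r' : size r = nth 0 (A ++ W) (size A).-1.
  by rewrite nth_cat prednK // leqnn nth_last.
have := quasistrong_drop 1 (quasistrong_cone srt qT lt_A rT size_r').
by rewrite drop_drop add1n prednK // drop_size_cat.
Qed.

Lemma rooted_cone W P r :
  sorted ltn W -> quasistrong W P -> W != [::] -> r \in P -> size r = head 0 W ->
  rooted_quasistrong W r (cone r P).
Proof.
move=> srt qP neW rP size_r; split=> //.
- rewrite -[W]drop0; apply: quasistrong_cone; rewrite ?lt0n ?size_eq0 ?nth0 //.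
- by rewrite mem_filter /compatible prefix_refl.
- by move=> t; rewrite mem_filter => /andP[].
Qed.

Lemma splits_cat T A W : A != [::] ->
  (forall j, j.+1 < size A -> splits T (nth 0 A j) (nth 0 A j.+1)) ->
  splits T (last 0 A) (head 0 W) ->
  (forall j, j.+1 < size W -> splits T (nth 0 W j) (nth 0 W j.+1)) ->
  forall j, j.+1 < size (A ++ W) -> splits T (nth 0 (A ++ W) j) (nth 0 (A ++ W) j.+1).
Proof.
move=> neA splA splAW splW j; rewrite size_cat !nth_cat => lt_j.
case: (ltngtP j.+1 (size A)) => [lt_jA | lt_Aj | eq_jA].
- exact: splA.
- by rewrite subSn //; apply: splW; lia.
- by rewrite -eq_jA subnn nth0 [j](_ : _ = (size A).-1) ?nth_last // -eq_jA.
Qed.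

Definition nodes_at (x : nat) (T : seq string) := [seq t <- T | size t == x].

Lemma mem_nodes_at x T t : (t \in nodes_at x T) = (t \in T) && (size t == x).
Proof. by rewrite mem_filter andbC. Qed.

Lemma size_nodes_at x T t : t \in nodes_at x T -> size t = x.
Proof. by rewrite mem_nodes_at => /andP[_ /eqP]. Qed.

End QuasistrongTrees.

Section Graft.
Variables (Y0 YR : seq nat) (S0 : seq string).
Variables (r : bool -> string -> string) (P : bool -> string -> seq string).
Hypotheses (srtY : sorted ltn (Y0 ++ YR)) (neY0 : Y0 != [::]) (neYR : YR != [::]).
Hypothesis qS0 : quasistrong Y0 S0.
Local Notation top := (nodes_at (last 0 Y0) S0).
Hypothesis rootedP : forall b u, u \in top -> rooted_quasistrong YR (r b u) (P b u).
Hypothesis u_r : forall b u, u \in top -> prefix u (r b u).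
Hypothesis neq_r : forall u, u \in top -> r true u != r false u.

Definition graft :=
  [seq t <- S0 | has (prefix t) top] ++ flatten [seq P true u ++ P false u | u <- top].

Let lt_Y0_YR : last 0 Y0 < head 0 YR.
Proof. exact: sorted_cat_ltn srtY (last_in 0 neY0) (head_in 0 neYR). Qed.

Lemma top_prefix_S0 t u : u \in top -> prefix t u -> t \in S0.
Proof. by rewrite mem_nodes_at => /andP[uS0 _]; apply: qS0.1. Qed.

Lemma graft_lower t u : u \in top -> prefix t u -> t \in graft.
Proof.
move=> utop tu; rewrite mem_cat mem_filter (top_prefix_S0 utop tu) andbT.
by apply/orP; left; apply/hasP; exists u.
Qed.

Lemma graft_upper b u t : u \in top -> t \in P b u -> t \in graft.
Proof.
move=> utop tP; rewrite mem_cat; apply/orP; right; apply/flattenP.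
exists (P true u ++ P false u); first by apply/mapP; exists u.
by rewrite mem_cat; case: b tP => ->; rewrite ?orbT.
Qed.

Lemma graftP t : t \in graft ->
  (exists2 u, u \in top & prefix t u) \/ exists b, exists2 u, u \in top & t \in P b u.
Proof.
rewrite mem_cat mem_filter => /orP[/andP[/hasP[u utop tu] _] | /flattenP[Q /mapP[u utop ->]]].
  by left; exists u.
by rewrite mem_cat => /orP[tP|tP]; right; [exists true | exists false]; exists u.
Qed.

Lemma graft_low t : t \in graft -> size t <= last 0 Y0 -> exists2 u, u \in top & prefix t u.
Proof.
case/graftP=> [//|[b [u utop tP]]] le_t; exists u => //.
have [_ _ size_r cmp] := rootedP b utop.
have t_r : prefix t (r b u).
  by apply: compatible_prefix; rewrite 1?compatibleC ?cmp // size_r (leq_trans le_t (ltnW _)).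
apply: prefix_prefix_leq t_r (u_r b utop) _.
by rewrite (size_nodes_at utop).
Qed.

Lemma graft_high t : t \in graft -> last 0 Y0 < size t ->
  exists b, exists2 u, u \in top & t \in P b u.
Proof.
case/graftP=> [[u utop tu] | //].
by rewrite ltnNge -(size_nodes_at utop) size_prefix.
Qed.

Lemma top_root_inj b b' u u' : u \in top -> u' \in top -> r b u = r b' u' ->
  b = b' /\ u = u'.
Proof.
move=> utop u'top eq_r.
have eq_u : u = u'.
  apply: prefix_prefix_eq (u_r b utop) _ _; first by rewrite eq_r; exact: u_r.
  by rewrite (size_nodes_at utop) (size_nodes_at u'top).
split=> //; subst u'; have := neq_r utop.
by case: b b' eq_r => [] [] // ->; rewrite eqxx.
Qed.

Lemma graft_tree : is_tree graft.
Proof.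
move=> t /graftP[[u utop tu] | [b [u utop tP]]] s st.
  exact: graft_lower utop (prefix_trans st tu).
have [[trP _] _ _ _] := rootedP b utop.
exact: graft_upper utop (trP _ tP _ st).
Qed.

Lemma graft_levels x : x \in Y0 ++ YR -> exists s, s \in graft /\ size s = x.
Proof.
have [u0 [u0S size_u0]] := qS0.2.1 _ (last_in 0 neY0).
have u0top : u0 \in top by rewrite mem_nodes_at u0S size_u0 eqxx.
rewrite mem_cat => /orP[xY0 | xYR].
  exists (take x u0); split; first exact: graft_lower u0top (prefix_take _ _).
  by rewrite size_takel // size_u0 (sorted_leq_last (cat_sorted2 srtY).1).
have [[_ [levP _]] _ _ _] := rootedP true u0top.
have [s [sP size_s]] := levP x xYR.
by exists s; split=> //; exact: graft_upper u0top sP.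
Qed.

Lemma graft_split_low j : j.+1 < size Y0 -> splits graft (nth 0 Y0 j) (nth 0 Y0 j.+1).
Proof.
move=> lt_j s sG size_s.
have le_last i : i < size Y0 -> nth 0 Y0 i <= last 0 Y0.
  by move=> lt_i; exact: sorted_leq_last (cat_sorted2 srtY).1 (mem_nth 0 lt_i).
have [u utop su] := graft_low sG (leq_trans (eq_leq size_s) (le_last j (ltnW lt_j))).
have [_ [_ splS0]] := qS0.
have [t1 [t2 [t1S t2S size_t1 size_t2 [st1 st2 neq_t inc_t uniq_t]]]] :=
  splS0 j lt_j s (top_prefix_S0 utop su) size_s.
have inG t : t \in S0 -> size t = nth 0 Y0 j.+1 -> t \in graft.
  move=> tS0 size_t.
  have [||v [vS0 size_v tv]] := quasistrong_extend qS0 tS0 size_t (j' := (size Y0).-1).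
  - by rewrite -ltnS prednK // (leq_ltn_trans _ lt_j).
  - by rewrite prednK // (leq_ltn_trans _ lt_j).
  by apply: graft_lower tv; rewrite mem_nodes_at vS0 size_v nth_last eqxx.
exists t1, t2; split; rewrite ?inG //; split=> // t tG size_t st; apply: uniq_t => //.
have [v vtop tv] := graft_low tG (leq_trans (eq_leq size_t) (le_last _ lt_j)).
exact: top_prefix_S0 vtop tv.
Qed.

Lemma graft_split_top : splits graft (last 0 Y0) (head 0 YR).
Proof.
move=> s sG size_s; have [u utop su] := graft_low sG (eq_leq size_s).
have eq_su : s = u.
  by apply: prefix_size_eq su _; rewrite size_s (size_nodes_at utop).
subst u; have [[_ r1P size_r1 _] [_ r2P size_r2 _]] := (rootedP true utop, rootedP false utop).
exists (r true s), (r false s).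
split; rewrite ?(graft_upper utop r1P) ?(graft_upper utop r2P) //.
have neq_rs := neq_r utop.
split; rewrite ?u_r ?incompatible_neq ?size_r1 ?size_r2 //.
move=> t tG size_t st.
have [|b [v vtop tP]] := graft_high tG; first by rewrite size_t.
have [_ _ size_r cmp] := rootedP b vtop.
have eq_t : r b v = t.
  apply: prefix_size_eq; rewrite ?size_r //.
  by apply: compatible_prefix (cmp t tP) _; rewrite size_r size_t.
have eq_v : v = s.
  apply: prefix_prefix_eq (u_r b vtop) _ _; first by rewrite eq_t.
  by rewrite (size_nodes_at vtop) (size_nodes_at utop).
by subst v t; case: b {tP cmp size_r tG size_t st}; [left | right].
Qed.

Lemma graft_split_high j : j.+1 < size YR -> splits graft (nth 0 YR j) (nth 0 YR j.+1).
Proof.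
move=> lt_j s sG size_s.
have ge_head i : i < size YR -> head 0 YR <= nth 0 YR i.
  by move=> lt_i; exact: sorted_head_leq (cat_sorted2 srtY).2 (mem_nth 0 lt_i).
have [|b [u utop sP]] := graft_high sG.
  by rewrite size_s; exact: leq_trans lt_Y0_YR (ge_head _ (ltnW lt_j)).
have [[_ [_ splP]] _ size_r cmp] := rootedP b utop.
have [t1 [t2 [t1P t2P size_t1 size_t2 [st1 st2 neq_t inc_t uniq_t]]]] :=
  splP j lt_j s sP size_s.
exists t1, t2; split; rewrite ?(graft_upper utop t1P) ?(graft_upper utop t2P) //.
split=> // t tG size_t st.
have lt_t : last 0 Y0 < size t by rewrite size_t (leq_trans lt_Y0_YR (ge_head _ lt_j)).
have [b' [u' u'top tP']] := graft_high tG lt_t.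
have [_ _ size_r' cmp'] := rootedP b' u'top.
have r_s : prefix (r b u) s.
  by apply: compatible_prefix (cmp s sP) _; rewrite size_r size_s ge_head // ltnW.
have r'_t : prefix (r b' u') t.
  by apply: compatible_prefix (cmp' t tP') _; rewrite size_r' size_t ge_head.
have eq_r : r b u = r b' u'.
  by apply: prefix_prefix_eq (prefix_trans r_s st) r'_t _; rewrite size_r size_r'.
have [eq_b eq_u] := top_root_inj utop u'top eq_r.
by apply: uniq_t; rewrite // eq_b eq_u.
Qed.

Lemma graft_quasistrong : quasistrong (Y0 ++ YR) graft.
Proof.
split; first exact: graft_tree.
split; first exact: graft_levels.
exact: splits_cat neY0 graft_split_low graft_split_top graft_split_high.
Qed.

Lemma graft_sub (T : seq string) : {subset S0 <= T} ->
  (forall b u, u \in top -> {subset P b u <= T}) -> {subset graft <= T}.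
Proof.
move=> S0T PT t /graftP[[u utop tu] | [b [u utop tP]]]; last exact: PT b u utop t tP.
by apply: S0T; exact: top_prefix_S0 utop tu.
Qed.

Lemma graft_leaf s : leaf graft s -> exists b, exists2 u, u \in top & leaf (P b u) s.
Proof.
case=> sG max_s; case: (leqP (size s) (last 0 Y0)) => [le_s | lt_s].
  have [u utop su] := graft_low sG le_s.
  have [_ rP size_r _] := rootedP true utop.
  have eq_r := max_s _ (graft_upper utop rP) (prefix_trans su (u_r true utop)).
  by move: le_s; rewrite -eq_r size_r leqNgt lt_Y0_YR.
have [b [u utop sP]] := graft_high sG lt_s.
by exists b, u => //; split=> // t tP; apply: max_s; exact: graft_upper utop tP.
Qed.

End Graft.

Definition leaves_extend k (T : seq string) (x : nat) (C : string -> 'I_k) (c : 'I_k)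
    (S : seq string) :=
  forall s, leaf S s -> exists t, [/\ t \in T, size t = x, prefix s t & C t = c].

(* [persistent d m k i.+1 X] unfolds to a nonempty i-persistent [Y] ⊆ [X] with
   [reduces k X Y]. *)
Definition reduces k (X Y : seq nat) :=
  forall T, quasistrong X T -> forall C : string -> 'I_k,
    exists c S, [/\ {subset S <= T}, quasistrong Y S & leaves_extend T (set_max X) C c S].

Lemma reduces_monochromatic_pair k (B Y : seq nat) (T : seq string) (D : string -> 'I_k) :
  reduces k B Y -> 1 < size Y -> quasistrong B T ->
  exists t1 t2, [/\ t1 \in T, t2 \in T, size t1 = set_max B, size t2 = set_max B &
                    t1 != t2 /\ D t1 = D t2].
Proof.
move=> redBY Y_gt1 qT; have [c [S [_ [_ [levS splS]] extS]]] := redBY T qT D.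
have [rho [rhoS size_rho]] := levS _ (mem_nth 0 (ltnW Y_gt1)).
have [r1 [r2 [r1S r2S size_r1 size_r2 [_ _ neq_r _ _]]]] := splS 0 Y_gt1 rho rhoS size_rho.
have [l1 leaf1 r1l1] := leaf_above r1S.
have [l2 leaf2 r2l2] := leaf_above r2S.
have [t1 [t1T size_t1 l1t1 Dt1]] := extS _ leaf1.
have [t2 [t2T size_t2 l2t2 Dt2]] := extS _ leaf2.
exists t1, t2; split=> //; split; last by rewrite Dt1 Dt2.
apply: contra neq_r => /eqP eq_t.
apply/eqP/(prefix_prefix_eq (prefix_trans r1l1 l1t1)); last by rewrite size_r1 size_r2.
by rewrite eq_t; exact: prefix_trans r2l2 l2t2.
Qed.

Section Glue.
Variables (k : nat) (B0 B1 R Y0 Y1 YR : seq nat).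
Hypotheses (srtB : sorted ltn (B0 ++ B1 ++ R)) (neB1 : B1 != [::]).
Hypotheses (srtY0 : sorted ltn Y0) (neY0 : Y0 != [::]) (subY0 : {subset Y0 <= B0}).
Hypotheses (srtYR : sorted ltn YR) (neYR : YR != [::]) (subYR : {subset YR <= R}).
Hypothesis Y1_gt1 : 1 < size Y1.
Hypotheses (red0 : reduces k B0 Y0) (red1 : reduces k B1 Y1) (redR : reduces k R YR).

Let neB0 : B0 != [::].
Proof. by apply: contraTneq (subY0 (head_in 0 neY0)) => ->. Qed.

Let lt_B0_B1 : last 0 B0 < last 0 B1.
Proof. by apply: sorted_cat_ltn srtB (last_in 0 neB0) _; rewrite mem_cat last_in. Qed.

Let lt_B1_YR : last 0 B1 < head 0 YR.
Proof.
exact: sorted_cat_ltn (cat_sorted2 srtB).2 (last_in 0 neB1) (subYR (head_in 0 neYR)).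
Qed.

Let srtY : sorted ltn (Y0 ++ YR).
Proof.
rewrite sorted_ltn_cat srtY0 srtYR; apply/allrelP => y0 yR y0Y0 yRYR.
by apply: sorted_cat_ltn srtB (subY0 y0Y0) _; rewrite mem_cat subYR ?orbT.
Qed.

Let max_B : set_max (B0 ++ B1 ++ R) = last 0 R.
Proof.
rewrite /set_max !last_cat; apply: last_nonempty.
by apply: contraTneq (subYR (head_in 0 neYR)) => ->.
Qed.

Section GlueTree.
Variables (T : seq string) (C : string -> 'I_k).
Hypothesis qT : quasistrong (B0 ++ B1 ++ R) T.

(* [p] = (colour, (root, subtree)). *)
Definition coloured_subtree tau (p : 'I_k * (string * seq string)) :=
  [/\ {subset p.2.2 <= T}, rooted_quasistrong YR p.2.1 p.2.2, prefix tau p.2.1 &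
      leaves_extend T (last 0 R) C p.1 p.2.2].

Definition fork (D : string -> 'I_k) sg (f : bool -> string) :=
  f true != f false /\
  forall b, [/\ f b \in nodes_at (last 0 B1) T, prefix sg (f b) & D (f b) = D (f true)].

Lemma glue_subtree tau : tau \in nodes_at (last 0 B1) T -> exists p, coloured_subtree tau p.
Proof.
rewrite mem_nodes_at => /andP[tauT /eqP size_tau].
have qcone : quasistrong R (cone tau T).
  apply: (quasistrong_cone_cat (A := B0 ++ B1)); rewrite -?catA //.
    by case: (B0).
  by rewrite size_tau last_cat; apply: last_nonempty.
have [c [S [S_cone qS extS]]] := redR qcone C.
have S_T : {subset S <= T} by move=> s /S_cone; rewrite mem_filter => /andP[].
have [r [rS size_r]] := qS.2.1 _ (head_in 0 neYR).
exists (c, (r, cone r S)); split=> /=.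
- by move=> t; rewrite mem_filter => /andP[_ /S_T].
- exact: rooted_cone.
- apply: compatible_prefix; first by move: (S_cone r rS); rewrite mem_filter => /andP[].
  by rewrite size_tau size_r ltnW.
- move=> s /(leaf_cone rS)/extS[t [tcone size_t st Ct]]; exists t; split=> //.
  by move: tcone; rewrite mem_filter => /andP[].
Qed.

Lemma glue_fork (D : string -> 'I_k) sg :
  sg \in nodes_at (last 0 B0) T -> exists f, fork D sg f.
Proof.
rewrite mem_nodes_at => /andP[sgT /eqP size_sg].
have qcone : quasistrong B1 (cone sg T).
  have := quasistrong_take (size B1) (quasistrong_cone_cat srtB qT neB0 sgT size_sg).
  by rewrite take_size_cat.
have [t1 [t2 [t1C t2C size_t1 size_t2 [neq_t Dt]]]] :=
  reduces_monochromatic_pair D red1 Y1_gt1 qcone.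
have above t : t \in cone sg T -> size t = last 0 B1 ->
    t \in nodes_at (last 0 B1) T /\ prefix sg t.
  rewrite mem_filter mem_nodes_at => /andP[cmp ->] size_t; rewrite size_t eqxx.
  by split=> //; apply: compatible_prefix cmp _; rewrite size_sg size_t ltnW.
exists (fun b => if b then t1 else t2); split=> // - [] /=.
  by have [t1T sgt1] := above t1 t1C size_t1.
by have [t2T sgt2] := above t2 t2C size_t2.
Qed.

Section GlueGraft.
Variables (F1 : string -> 'I_k * (string * seq string)) (F2 : string -> bool -> string).
Local Notation colour tau := (F1 tau).1.
Hypothesis HF1 : forall tau, tau \in nodes_at (last 0 B1) T -> coloured_subtree tau (F1 tau).
Hypothesis HF2 :
  forall sg, sg \in nodes_at (last 0 B0) T -> fork (fun tau => colour tau) sg (F2 sg).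
Variables (cs : 'I_k) (S0 : seq string).
Hypotheses (S0T : {subset S0 <= T}) (qS0 : quasistrong Y0 S0).
Hypothesis extS0 : leaves_extend T (set_max B0) (fun sg => colour (F2 sg true)) cs S0.

Lemma glue_graft :
  exists S, [/\ {subset S <= T}, quasistrong (Y0 ++ YR) S & leaves_extend T (last 0 R) C cs S].
Proof.
have /(guarded_choice [::]) [F3 HF3] : forall u, u \in S0 ->
    exists sg, [/\ sg \in nodes_at (last 0 B0) T, prefix u sg & colour (F2 sg true) = cs].
  move=> u uS0; have [l leaf_l ul] := leaf_above uS0.
  have [sg [sgT size_sg lsg Csg]] := extS0 leaf_l.
  by exists sg; rewrite mem_nodes_at sgT size_sg eqxx (prefix_trans ul lsg).
pose top := nodes_at (last 0 Y0) S0.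
pose tau b u := F2 (F3 u) b.
have fork_tau u : u \in top -> tau true u != tau false u /\ forall b,
    [/\ tau b u \in nodes_at (last 0 B1) T, prefix u (tau b u) & colour (tau b u) = cs].
  rewrite mem_nodes_at => /andP[/HF3[/HF2[neq_f Hf] usg <-] _]; split=> // b.
  by have [? sgf ->] := Hf b; rewrite (prefix_trans usg sgf).
pose P b u := (F1 (tau b u)).2.2.
pose r b u := (F1 (tau b u)).2.1.
have HP b u : u \in top -> [/\ {subset P b u <= T}, rooted_quasistrong YR (r b u) (P b u),
    prefix (tau b u) (r b u) & leaves_extend T (last 0 R) C cs (P b u)].
  by case/fork_tau=> _ /(_ b)[/HF1[PT rooted taur ext] _ <-].
have u_r b u : u \in top -> prefix u (r b u).
  move=> utop; have [_ /(_ b)[_ utau _]] := fork_tau u utop.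
  by have [_ _ taur _] := HP b u utop; exact: prefix_trans utau taur.
have neq_r u : u \in top -> r true u != r false u.
  move=> utop; have [neq_tau Htau] := fork_tau u utop.
  have [[tau1 _ _] [tau2 _ _]] := (Htau true, Htau false).
  have [[_ _ t1r _] [_ _ t2r _]] := (HP true u utop, HP false u utop).
  apply: contra neq_tau => /eqP eq_r; apply/eqP/(prefix_prefix_eq t1r).
    by rewrite eq_r.
  by rewrite (size_nodes_at tau1) (size_nodes_at tau2).
have PT b u : u \in top -> {subset P b u <= T} by case/(HP b u).
have rootedP b u : u \in top -> rooted_quasistrong YR (r b u) (P b u) by case/(HP b u).
exists (graft Y0 S0 P); split.
- exact/(graft_sub qS0 S0T PT).
- exact: graft_quasistrong srtY neY0 neYR qS0 rootedP u_r neq_r.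
- move=> s /(graft_leaf srtY neY0 neYR rootedP u_r)[b [u utop leaf_s]].
  by have [_ _ _ ext] := HP b u utop; exact: ext.
Qed.

End GlueGraft.
End GlueTree.

Lemma reduces_glue : reduces k (B0 ++ B1 ++ R) (Y0 ++ YR).
Proof.
move=> T qT C.
have /(guarded_choice (C [::], ([::], [::]))) [F1 HF1] := glue_subtree C qT.
have /(guarded_choice (fun=> [::])) [F2 HF2] := glue_fork qT (fun tau => (F1 tau).1).
have qB0 : quasistrong B0 T by have := quasistrong_take (size B0) qT; rewrite take_size_cat.
have [cs [S0 [S0T qS0 extS0]]] := red0 qB0 (fun sg => (F1 (F2 sg true)).1).
have [S [ST qS extS]] := glue_graft HF1 HF2 S0T qS0 extS0.
by exists cs, S; rewrite max_B.
Qed.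

End Glue.

Lemma persistent_pairs d m k i M Xs : 0 < m -> size Xs = (2 * M).+1 -> is_stack Xs ->
  (forall X, X \in Xs -> persistent d m k i.+1 X) ->
  exists Ys, [/\ size Ys = M.+1, is_stack Ys, (forall Y, Y \in Ys -> persistent d m k i Y),
                 {subset flatten Ys <= flatten Xs} & reduces k (flatten Xs) (flatten Ys)].
Proof.
move=> m_gt0; elim: M Xs => [|M IH] [|X0 [|X1 Xs]] // size_Xs stXs pXs.
  have [Y0 [sY0 neY0 subY0 pY0 red0]] := pXs X0 (mem_head _ _).
  exists [:: Y0]; rewrite /= !cats0; split=> //.
  - by apply/is_stack_consE; split; rewrite ?cats0 //; apply/is_stackE.
  - by move=> Y; rewrite inE => /eqP->.
have [neX0 /is_stack_consE[neX1 stXs' _] srt01] := (is_stack_consE X0 (X1 :: Xs)).1 stXs.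
have size_Xs' : size Xs = (2 * M).+1 by move: size_Xs; rewrite mulnS; case.
have pXs' X : X \in Xs -> persistent d m k i.+1 X.
  by move=> XXs; apply: pXs; rewrite !inE XXs !orbT.
have [Ys [size_Ys stYs pYs subYs redYs]] := IH Xs size_Xs' stXs' pXs'.
have [Y0 [sY0 neY0 subY0 pY0 red0]] := pXs X0 (mem_head _ _).
have [Y1 [_ _ subY1 pY1 red1]] : persistent d m k i.+1 X1.
  by apply: pXs; rewrite !inE eqxx orbT.
have Y1_gt1 : 1 < size Y1.
  apply: persistent_size_gt1 m_gt0 pY1 _ => x /subY1 xX1.
  apply: leq_ltn_trans (leq0n _) (sorted_cat_ltn srt01 (last_in 0 neX0) _).
  by rewrite mem_cat xX1.
have [_ srtYs] := (is_stackE Ys).1 stYs.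
have neYs : flatten Ys != [::] by apply: flatten_stack_neq0; rewrite // -size_eq0 size_Ys.
exists (Y0 :: Ys); split.
- by rewrite /= size_Ys.
- apply/is_stack_consE; split; rewrite // sorted_ltn_cat sY0 srtYs.
  apply/allrelP => y0 y y0Y0 yYs.
  by apply: sorted_cat_ltn srt01 (subY0 _ y0Y0) _; rewrite mem_cat subYs ?orbT.
- by move=> Y; rewrite inE => /predU1P[->|/pYs].
- by move=> x; rewrite /= !mem_cat => /orP[/subY0->|/subYs->]; rewrite ?orbT.
- exact: reduces_glue srt01 neX1 sY0 neY0 subY0 srtYs neYs subYs Y1_gt1 red0 red1 redYs.
Qed.

Theorem lemma2p10 (d m n k i : nat) (Xs : seq (seq nat)) :
  1 <= d -> 1 <= m -> 1 <= n -> 1 <= k ->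
  is_stack Xs ->
  size Xs = 2 ^ i * n - 2 ^ i + 1 ->
  (forall X, X \in Xs -> persistent d m k i X) ->
  persistent d (m * n) k i (flatten Xs).
Proof.
move=> _ m_gt0 n_gt0 _; elim: i Xs => [|i IH] Xs stXs size_Xs pXs.
  rewrite expn0 mul1n subnK // in size_Xs.
  by rewrite -size_Xs; exact: large_flatten.
have size_Xs' : size Xs = (2 * (2 ^ i * n - 2 ^ i)).+1.
  by rewrite size_Xs expnS -mulnA mulnBr addn1.
have [Ys [size_Ys stYs pYs subYs redYs]] := persistent_pairs m_gt0 size_Xs' stXs pXs.
exists (flatten Ys); split=> //.
- by case/is_stackE: stYs.
- by apply: flatten_stack_neq0; rewrite // -size_eq0 size_Ys.
- by apply: IH; rewrite ?size_Ys ?addn1.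
Qed.
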